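(* Let $(x_n)_{n<\omega}$ be an almost overcomplete sequence in a real normed space $X$. If $x_n \to x$ weakly, then $x_n \to x$ in norm.
   Context: A sequence in a normed space $X$ is almost overcomplete if the closed linear span of every subsequence of it has finite codimension in $X$. *)

From HB Require Import structures.
From mathcomp Require Import all_boot all_order all_algebra.
From mathcomp Require Import all_classical all_reals all_analysis.
Set Implicit Arguments. Unset Strict Implicit. Unset Printing Implicit Defensive.
Import Order.TTheory GRing.Theory Num.Theory.
Import numFieldNormedType.Exports.
Local Open Scope classical_set_scope.
Local Open Scope ring_scope.

Section Defs.
Context {R : realType} {X : normedModType R}.

Definition lin_span (S : set X) : set X :=
  [set v | exists (n : nat) (c : 'I_n -> R) (s : 'I_n -> X),
             (forall i, S (s i)) /\ v = \sum_(i < n) c i *: s i].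

Definition closed_span (S : set X) : set X := closure (lin_span S).

(* a (linear) subspace Y has finite codimension in X: the quotient X/Y is
   spanned by finitely many classes, i.e. X = Y + span(e_0,...,e_{n-1}) *)
Definition finite_codim (Y : set X) : Prop :=
  exists (n : nat) (e : 'I_n -> X), forall v : X,
    exists y, Y y /\ exists c : 'I_n -> R, v = y + \sum_(i < n) c i *: e i.

Definition almost_overcomplete (x : nat -> X) : Prop :=
  forall phi : nat -> nat, (forall m n, (m < n)%N -> (phi m < phi n)%N) ->
    finite_codim (closed_span (range (x \o phi))).

Definition weak_cvg (x : nat -> X) (l : X) : Prop :=
  forall f : X -> R,
    (forall (a : R) (u v : X), f (a *: u + v) = a * f u + f v) ->
    continuous f ->
    (fun n => f (x n)) @ \oo --> f l.

End Defs.

From HB Require Import structures.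
From mathcomp Require Import all_boot all_order all_algebra.
From mathcomp Require Import all_classical all_reals all_analysis.
From mathcomp Require Import lra.
Import Order.TTheory GRing.Theory Num.Theory.
Import numFieldNormedType.Exports.
Local Open Scope classical_set_scope.
Local Open Scope ring_scope.
Set Implicit Arguments. Unset Strict Implicit. Unset Printing Implicit Defensive.

(* Suppose [x] does not converge to [l] in norm, and pass to a subsequence [y]
   with [eps <= `|y k - l|].  Then [u k = y k - l] is weakly null and bounded
   below, so (Mazur) for every finite-dimensional subspace [E] and [d > 0],
   eventually [(1 - d) |e| <= |e + t u k|] on [E]; this needs finitely many
   norming functionals for [E], given by Hahn-Banach and the total boundedness
   of bounded parts of [E].  Chaining these estimates shows that for any finite
   [F] some [y a] lies outside the closed span of [F] and of a subsequence of
   [y] beyond [a].  A diagonal iteration then gives a subsequence of [y] with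
   closed span [Z] and vectors [b j] such that [b j] lies outside a closed
   subspace containing [Z] and all [b i], [i > j].  Hence [b 0, ..., b n] are
   independent modulo [Z] for every [n], so [Z] has infinite codimension. *)

Section LinearSubspace.
Context {R : realType} {X : normedModType R}.
Implicit Types (A B P : set X) (u v : X).

Definition lsubspace P := P 0 /\ forall (a : R) u v, P u -> P v -> P (a *: u + v).

Lemma lsubspace0 P : lsubspace P -> P 0.
Proof. by case. Qed.

Lemma lsubspaceD P u v : lsubspace P -> P u -> P v -> P (u + v).
Proof. by move=> [_ PZD] Pu Pv; have := PZD 1 u v Pu Pv; rewrite scale1r. Qed.

Lemma lsubspaceZ P a u : lsubspace P -> P u -> P (a *: u).
Proof. by move=> [P0 PZD] Pu; have := PZD a u 0 Pu P0; rewrite addr0. Qed.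

Lemma lsubspaceB P u v : lsubspace P -> P u -> P v -> P (u - v).
Proof. by move=> sP Pu Pv; rewrite -scaleN1r; apply: lsubspaceD; last exact: lsubspaceZ. Qed.

Lemma lsubspace_sum P (I : Type) (r : seq I) (Q : pred I) (F : I -> X) :
  lsubspace P -> (forall i, Q i -> P (F i)) -> P (\sum_(i <- r | Q i) F i).
Proof.
move=> sP PF; apply: big_ind => //; first exact: lsubspace0.
by move=> u v; apply: lsubspaceD.
Qed.

Lemma lsubspace_lin_span A : lsubspace (lin_span A).
Proof.
split; first by exists 0%N, (fun _ => 0), (fun _ => 0); split; [case | rewrite big_ord0].
move=> a u v [n [c [s [As ->]]]] [m [d [t [At ->]]]].
exists (n + m)%N.
exists (fun i => match fintype.split i with inl j => a * c j | inr j => d j end).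
exists (fun i => match fintype.split i with inl j => s j | inr j => t j end).
split; first by move=> i; case: (fintype.split i).
rewrite big_split_ord /= scaler_sumr; congr (_ + _); apply: eq_bigr => i _.
  by rewrite (unsplitK (inl i)) scalerA.
by rewrite (unsplitK (inr i)).
Qed.

Lemma sub_lin_span A : A `<=` lin_span A.
Proof.
by move=> v Av; exists 1%N, (fun _ => 1), (fun _ => v); rewrite big_ord1 scale1r.
Qed.

Lemma lin_span_sub A P : lsubspace P -> A `<=` P -> lin_span A `<=` P.
Proof.
move=> sP AP _ [n [c [s [As ->]]]].
by apply: lsubspace_sum => // i _; apply: lsubspaceZ => //; apply: AP.
Qed.

Lemma lin_span_subset A B : A `<=` B -> lin_span A `<=` lin_span B.
Proof.
move=> AB; apply: lin_span_sub; first exact: lsubspace_lin_span.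
by move=> v /AB; apply: sub_lin_span.
Qed.

Lemma closure_normP A p :
  closure A p <-> forall e : R, 0 < e -> exists2 a, A a & `|p - a| < e.
Proof.
split=> [Ap e e0|Ap B /nbhs_normP [e /= e0 epsB]].
  by have [a [Aa]] := Ap _ (nbhsx_ballx p e e0); rewrite -ball_normE; exists a.
by have [a Aa pa] := Ap e e0; exists a; split => //; apply: epsB.
Qed.

Lemma lsubspace_closure P : lsubspace P -> lsubspace (closure P).
Proof.
move=> sP; split; first by apply: subset_closure; apply: lsubspace0.
move=> a u v /closure_normP Pu /closure_normP Pv; apply/closure_normP => e e0.
have a1_gt0 : 0 < `|a| + 1 by rewrite ltr_wpDl.
have e2_gt0 : 0 < e / 2 by rewrite divr_gt0.
have [u' Pu' uu'] := Pu _ (divr_gt0 e2_gt0 a1_gt0).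
have [v' Pv' vv'] := Pv _ e2_gt0.
exists (a *: u' + v'); first by case: sP => _; apply.
have -> : a *: u + v - (a *: u' + v') = a *: (u - u') + (v - v').
  by rewrite scalerBr opprD addrACA.
rewrite (le_lt_trans (ler_normD _ _)) // normrZ (splitr e) ltr_leD ?ltW //.
rewrite (le_lt_trans (y := (`|a| + 1) * `|u - u'|)) ?ler_wpM2r ?lerDl //.
by rewrite -ltr_pdivlMl // mulrC.
Qed.

End LinearSubspace.

Section LinearFunctional.
Context {R : realType} {X : normedModType R}.
Implicit Types (f : X -> R) (u v : X).

Definition linear_functional f := forall (a : R) u v, f (a *: u + v) = a * f u + f v.

Definition contractive_functional f := linear_functional f /\ forall v, `|f v| <= `|v|.

Section Laws.
Variables (f : X -> R) (lf : linear_functional f).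

Lemma linear_functional0 : f 0 = 0.
Proof. by have := lf 1 0 0; rewrite scale1r addr0 mul1r -{1}[f 0]addr0 => /addrI. Qed.

Lemma linear_functionalD u v : f (u + v) = f u + f v.
Proof. by have := lf 1 u v; rewrite scale1r mul1r. Qed.

Lemma linear_functionalZ a u : f (a *: u) = a * f u.
Proof. by have := lf a u 0; rewrite !addr0 linear_functional0 addr0. Qed.

Lemma linear_functionalB u v : f (u - v) = f u - f v.
Proof. by rewrite linear_functionalD -scaleN1r linear_functionalZ mulN1r. Qed.

End Laws.

Lemma contractive_functional_continuous f : contractive_functional f -> continuous f.
Proof.
move=> [lf f_le] x; apply/cvgrPdist_lt => e e0.
apply/nbhs_normP; exists e => //= t /= xt.
by rewrite -(linear_functionalB lf); apply: le_lt_trans (f_le _) xt.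
Qed.

End LinearFunctional.

Section HahnBanach.
Context {R : realType} {X : normedModType R}.
Implicit Types (G : set (X * R)) (u v w : X).

Definition dominated_graph G :=
  [/\ forall v a b, G (v, a) -> G (v, b) -> a = b,
      G (0, 0),
      forall t u a v b, G (u, a) -> G (v, b) -> G (t *: u + v, t * a + b) &
      forall v a, G (v, a) -> a <= `|v|].

Lemma dominated_graphZ G w b s : dominated_graph G -> G (w, b) -> G (s *: w, s * b).
Proof. by move=> [_ G00 GZD _] Gwb; have := GZD s w b 0 0 Gwb G00; rewrite !addr0. Qed.

Definition graph_extension G v (c : R) : set (X * R) :=
  [set q | exists w b t, G (w, b) /\ q = (w + t *: v, b + t * c)].

Lemma sub_graph_extension G v c : G `<=` graph_extension G v c.
Proof. by move=> [w b] Gwb; exists w, b, 0; rewrite scale0r mul0r !addr0. Qed.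

Lemma extension_value G v : dominated_graph G -> exists c : R,
  (forall w b, G (w, b) -> b - `|w - v| <= c) /\
  (forall w b, G (w, b) -> c <= `|w + v| - b).
Proof.
move=> [_ G00 GZD Gle].
have sep w1 b1 w2 b2 : G (w1, b1) -> G (w2, b2) -> b1 - `|w1 - v| <= `|w2 + v| - b2.
  move=> G1 G2; have := Gle _ _ (GZD 1 _ _ _ _ G1 G2); rewrite scale1r mul1r.
  have : `|w1 + w2| <= `|w2 + v| + `|w1 - v|.
    have -> : w1 + w2 = (w2 + v) + (w1 - v) by rewrite addrACA subrr addr0 addrC.
    exact: ler_normD.
  lra.
pose lower := [set y : R | exists w b, G (w, b) /\ y = b - `|w - v|].
have lower_ub : ubound lower (`|0 + v| - 0) by move=> _ [w [b [Gwb ->]]]; exact: sep.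
have lower_n0 : lower !=set0 by exists (0 - `|0 - v|), 0, 0.
exists (sup lower); split.
  by move=> w b Gwb; apply: sup_upper_bound; [split; [|exists (`|0 + v| - 0)] | exists w, b].
by move=> w b Gwb; apply: ge_sup => // _ [w1 [b1 [G1 ->]]]; exact: sep.
Qed.

Lemma mulr_normZV (s : R) u v : 0 < s -> s * `|s^-1 *: u + v| = `|u + s *: v|.
Proof.
move=> s_gt0; have -> : u + s *: v = s *: (s^-1 *: u + v).
  by rewrite scalerDr scalerA divff ?gt_eqF // scale1r.
by rewrite normrZ gtr0_norm.
Qed.

Lemma dominated_graph_extension G v : dominated_graph G -> ~ (exists a, G (v, a)) ->
  exists c, dominated_graph (graph_extension G v c).
Proof.
move=> gG Gv_undef; have [Gfun G00 GZD Gle] := gG.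
have [c [c_lb c_ub]] := extension_value v gG.
exists c; split.
- move=> _ a1 a2 [w1 [b1 [t1 [G1 [-> ->]]]]] [w2 [b2 [t2 [G2 [E ->]]]]].
  have [t12|t12] := eqVneq t1 t2; last first.
    exfalso; apply: Gv_undef; exists ((t1 - t2)^-1 * (b2 - b1)).
    have -> : v = (t1 - t2)^-1 *: (w2 - w1).
      apply: (@scalerI _ _ (t1 - t2)); first by rewrite subr_eq0.
      rewrite scalerA divff ?subr_eq0 // scale1r scalerBl.
      by apply: (@addrI _ w1); rewrite addrA E addrK addrC subrK.
    apply: dominated_graphZ => //.
    by have := GZD (-1) _ _ _ _ G1 G2; rewrite scaleN1r mulN1r addrC [_ + b2]addrC.
  move: E; rewrite -t12 => /addIr w12; rewrite -w12 in G2.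
  by rewrite (Gfun _ _ _ G1 G2).
- by exists 0, 0, 0; rewrite scale0r mul0r !addr0.
- move=> s _ _ _ _ [w1 [b1 [t1 [G1 [-> ->]]]]] [w2 [b2 [t2 [G2 [-> ->]]]]].
  exists (s *: w1 + w2), (s * b1 + b2), (s * t1 + t2); split; first exact: GZD.
  congr (_, _).
    by rewrite scalerDr scalerDl scalerA addrACA.
  by rewrite mulrDr mulrDl mulrA addrACA.
- move=> _ _ [w [b [t [Gwb [-> ->]]]]].
  have [t_lt0|t_gt0|->] := ltgtP t 0; last by rewrite scale0r mul0r !addr0; apply: Gle.
  + have nt_gt0 : 0 < - t by rewrite oppr_gt0.
    have := c_lb _ _ (dominated_graphZ (- t)^-1 gG Gwb).
    rewrite -(ler_pM2l nt_gt0) mulrBr mulrA divff ?gt_eqF // mul1r.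
    by rewrite mulr_normZV // scaleNr scalerN opprK; lra.
  + have := c_ub _ _ (dominated_graphZ t^-1 gG Gwb).
    rewrite -(ler_pM2l t_gt0) mulrBr mulrA divff ?gt_eqF // mul1r mulr_normZV //.
    lra.
Qed.

Lemma dominated_graph_bigcup (F : set (set (X * R))) :
  F !=set0 -> total_on F subset -> (forall G, F G -> dominated_graph G) ->
  dominated_graph (\bigcup_(G in F) G).
Proof.
move=> [G0 FG0] Ftot Fdom.
have common q1 q2 : (\bigcup_(G in F) G) q1 -> (\bigcup_(G in F) G) q2 ->
    exists2 G, F G & G q1 /\ G q2.
  move=> [G1 FG1 G1q] [G2 FG2 G2q].
  by have [/(_ _ G1q)|/(_ _ G2q)] := Ftot _ _ FG1 FG2; [exists G2 | exists G1].
split.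
- move=> v a b Ua Ub; have [G FG [Ga Gb]] := common _ _ Ua Ub.
  by have [Gfun _ _ _] := Fdom _ FG; exact: Gfun Ga Gb.
- by exists G0 => //; have [] := Fdom _ FG0.
- move=> t u a v b Ua Ub; have [G FG [Ga Gb]] := common _ _ Ua Ub.
  by exists G => //; have [_ _ GZD _] := Fdom _ FG; exact: GZD.
- by move=> v a [G FG Ga]; have [_ _ _ Gle] := Fdom _ FG; exact: Gle.
Qed.

Definition norming_line (p : X) : set (X * R) := [set (t *: p, t * `|p|) | t in setT].

Lemma dominated_graph_norming_line p : dominated_graph (norming_line p).
Proof.
split.
- move=> _ a b [t _ [<- <-]] [s _ [/eqP E <-]].
  have [->|p0] := eqVneq p 0; first by rewrite normr0 !mulr0.
  by move: E; rewrite -subr_eq0 -scalerBl scaler_eq0 (negbTE p0) orbF subr_eq0 => /eqP ->.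
- by exists 0 => //; rewrite scale0r mul0r.
- move=> t _ _ _ _ [s _ [<- <-]] [r _ [<- <-]]; exists (t * s + r) => //.
  by rewrite scalerDl scalerA mulrDl mulrA.
- by move=> _ _ [t _ [<- <-]]; rewrite normrZ ler_wpM2r // ler_norm.
Qed.

Lemma dominated_graph_bigcup_setU (L : set (X * R)) (F : set (set (X * R))) :
  dominated_graph L -> (forall G, F G -> dominated_graph (G `|` L)) -> total_on F subset ->
  dominated_graph ((\bigcup_(G in F) G) `|` L).
Proof.
move=> L_dom FL_dom Ftot.
have -> : (\bigcup_(G in F) G) `|` L = \bigcup_(G in [set G `|` L | G in F] `|` [set L]) G.
  apply/seteqP; split=> q.
    case=> [[G FG Gq]|Lq]; last by exists L; [right|].
    by exists (G `|` L); [left; exists G|left].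
  by move=> [_ [[G FG <-]|->]] => [[Gq|Lq]|Lq]; [left; exists G|right|right].
apply: dominated_graph_bigcup; first by exists L; right.
  move=> _ _ [[G1 FG1 <-]|->] [[G2 FG2 <-]|->]; try by [left=> q; right|right=> q; right].
    by have [G12|G21] := Ftot _ _ FG1 FG2; [left|right]; apply: setSU.
  by left.
by move=> _ [[G FG <-]|->]; [apply: FL_dom|].
Qed.

Lemma dominated_graph_functional H : dominated_graph H -> (forall v, exists a, H (v, a)) ->
  exists2 f : X -> R, contractive_functional f & forall v, H (v, f v).
Proof.
move=> [Hfun _ HZD Hle] /choice [f Hf]; exists f => //.
have lf : linear_functional f.
  by move=> a u v; apply: Hfun _ _ _ (Hf _) (HZD _ _ _ _ _ (Hf u) (Hf v)).
split=> // v; rewrite ler_norml Hle ?andbT; last exact: Hf.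
rewrite lerNl; have := Hle _ _ (Hf (- v)).
by rewrite normrN -scaleN1r (linear_functionalZ lf) mulN1r.
Qed.

(* Zorn's lemma runs over the [G] such that [G `|` norming_line p] is dominated:
   this makes the empty chain harmless and forces [f p = `|p|]. *)
Lemma exists_norming_functional p :
  exists2 f : X -> R, contractive_functional f & f p = `|p|.
Proof.
pose L := norming_line p; have L_dom := dominated_graph_norming_line p.
have [A [AL_dom A_max]] := Zorn_bigcup (fun F => dominated_graph_bigcup_setU L_dom).
have AL_total v : exists a, (A `|` L) (v, a).
  apply: contrapT => v_undef.
  have [c B_dom] := dominated_graph_extension AL_dom v_undef.
  apply: (A_max (graph_extension (A `|` L) v c)).
    split; first by move=> q Aq; apply: sub_graph_extension; left.
    move=> BA; apply: v_undef; exists c; left; apply: BA.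
    by exists 0, 0, 1; rewrite scale1r mul1r !add0r; case: AL_dom.
  rewrite (setUidl (_ : L `<=` graph_extension (A `|` L) v c)) // => q Lq.
  by apply: sub_graph_extension; right.
have [f f_contr Hf] := dominated_graph_functional AL_dom AL_total.
have Lp : L (p, `|p|) by exists 1; rewrite ?scale1r ?mul1r.
by exists f => //; have [ALfun _ _ _] := AL_dom; exact: ALfun _ _ _ (Hf p) (or_intror Lp).
Qed.

End HahnBanach.

Section FiniteSpan.
Context {R : realType} {X : normedModType R}.
Implicit Types (L : seq X) (u v w e : X).

Lemma lin_span_nil e : lin_span [set` [::] : seq X] e -> e = 0.
Proof.
by move/(lin_span_sub (P := [set 0])); apply=> //; split=> // a _ _ -> ->; rewrite scaler0 addr0.
Qed.

Lemma lin_span_cons v L e : lin_span [set` v :: L] e ->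
  exists t w, lin_span [set` L] w /\ e = t *: v + w.
Proof.
have sL := lsubspace_lin_span [set` L].
apply: (lin_span_sub (P := [set e | exists t w, lin_span [set` L] w /\ e = t *: v + w])).
  split; first by exists 0, 0; rewrite scale0r addr0; split=> //; apply: lsubspace0.
  move=> a _ _ [t [w [Lw ->]]] [s [z [Lz ->]]].
  exists (a * t + s), (a *: w + z); split; first by case: sL => _; apply.
  by rewrite scalerDr scalerA scalerDl addrACA.
move=> y /=; rewrite inE => /orP [/eqP ->|yL].
  by exists 1, 0; rewrite scale1r addr0; split=> //; apply: lsubspace0.
by exists 0, y; rewrite scale0r add0r; split=> //; apply: sub_lin_span.
Qed.

Lemma lin_span_consl v L : lin_span [set` v :: L] v.
Proof. by apply: sub_lin_span; rewrite /= inE eqxx. Qed.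

Lemma lin_span_consr v L w : lin_span [set` L] w -> lin_span [set` v :: L] w.
Proof. by apply: lin_span_subset => u /= uL; rewrite inE uL orbT. Qed.

Lemma interval_net_aux (h : R) (N : nat) (a : R) : 0 < h -> exists ts : seq R,
  forall t, a <= t <= a + N%:R * h -> exists2 s, s \in ts & `|t - s| <= h.
Proof.
move=> h_gt0; elim: N a => [|N IH] a.
  exists [:: a] => t; rewrite mul0r addr0 -eq_le => /eqP <-.
  by exists a; rewrite ?inE ?subrr ?normr0 // ltW.
have [ts Hts] := IH (a + h); exists (a :: ts) => t /andP [at1 at2].
have [tah|tah] := leP t (a + h).
  by exists a; rewrite ?inE ?eqxx // ger0_norm ?subr_ge0 // lerBlDl.
have [|s sts ts_near] := Hts t; last by exists s; rewrite // inE sts orbT.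
by rewrite (ltW tah) /=; move: at2; rewrite -natr1 mulrDl mul1r -addrA [h + _]addrC.
Qed.

Lemma interval_net (T h : R) : 0 < h -> exists ts : seq R,
  forall t, `|t| <= T -> exists2 s, s \in ts & `|t - s| <= h.
Proof.
move=> h_gt0; have [T_ge0|T_lt0] := leP 0 T; last first.
  by exists [::] => t tT; have := le_lt_trans (normr_ge0 t) (le_lt_trans tT T_lt0); rewrite ltxx.
pose N := Num.Def.archi_bound (2 * T / h).
have HN : 2 * T / h < N%:R by apply: archi_boundP; rewrite divr_ge0 ?mulr_ge0 // ltW.
have [ts Hts] := interval_net_aux N (- T) h_gt0; exists ts => t; rewrite ler_norml.
move=> /andP [tT1 tT2]; apply: Hts; rewrite tT1 /=.
by move: HN; rewrite ltr_pdivrMr //; lra.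
Qed.

Lemma far_lin_span_scale L v (d : R) :
  (forall w, lin_span [set` L] w -> d <= `|v - w|) ->
  forall t w, lin_span [set` L] w -> `|t| * d <= `|t *: v + w|.
Proof.
move=> v_far t w Lw; have [->|t0] := eqVneq t 0; first by rewrite normr0 mul0r.
have -> : t *: v + w = t *: (v - (- t^-1 *: w)).
  by rewrite scaleNr opprK scalerDr scalerA divff // scale1r.
rewrite normrZ ler_pM2l ?normr_gt0 //; apply: v_far.
exact: lsubspaceZ (lsubspace_lin_span _) Lw.
Qed.

Definition has_ball_nets (S : set X) := forall r eta : R, 0 < eta ->
  exists ps : seq X, forall e, S e -> `|e| <= r -> exists2 q, q \in ps & `|e - q| <= eta.

Lemma has_ball_nets_cons_far L v (d : R) : has_ball_nets (lin_span [set` L]) -> 0 < d ->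
  (forall w, lin_span [set` L] w -> d <= `|v - w|) -> has_ball_nets (lin_span [set` v :: L]).
Proof.
move=> L_nets d_gt0 v_far r eta eta_gt0; have eta2_gt0 : 0 < eta / 2 by rewrite divr_gt0.
have [ps Hps] := L_nets (r + r / d * `|v|) (eta / 2) eta2_gt0.
have h_gt0 : 0 < eta / 2 / (`|v| + 1) by rewrite divr_gt0 // ltr_wpDl.
have [ts Hts] := interval_net (r / d) h_gt0.
exists [seq s *: v + q | s <- ts, q <- ps] => _ /lin_span_cons [t [w [Lw ->]]] er.
have tT : `|t| <= r / d.
  by rewrite ler_pdivlMr //; apply: le_trans (far_lin_span_scale v_far t Lw) er.
have wr : `|w| <= r + r / d * `|v|.
  rewrite -[w](addKr (t *: v)) (le_trans (ler_normD _ _)) // normrN normrZ addrC lerD //.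
  by rewrite ler_wpM2r.
have [s sts ts_near] := Hts _ tT; have [q qps ps_near] := Hps _ Lw wr.
exists (s *: v + q); first exact: allpairs_f.
have -> : t *: v + w - (s *: v + q) = (t - s) *: v + (w - q).
  by rewrite scalerBl opprD addrACA.
rewrite (le_trans (ler_normD _ _)) // normrZ (splitr eta) lerD //.
rewrite (le_trans (ler_wpM2r _ ts_near)) // mulrAC ler_pdivrMr ?ltr_wpDl //.
by rewrite ler_pM2l // lerDl.
Qed.

Lemma has_ball_nets_cons_closure L v : has_ball_nets (lin_span [set` L]) ->
  closure (lin_span [set` L]) v -> has_ball_nets (lin_span [set` v :: L]).
Proof.
move=> L_nets /closure_normP v_near r eta eta_gt0.
have eta2_gt0 : 0 < eta / 2 by rewrite divr_gt0.
have [ps Hps] := L_nets (r + eta / 2) (eta / 2) eta2_gt0.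
exists ps => _ /lin_span_cons [t [w [Lw ->]]] er.
have t1_gt0 : 0 < `|t| + 1 by rewrite ltr_wpDl.
have [w0 Lw0 vw0] := v_near _ (divr_gt0 eta2_gt0 t1_gt0).
have vw0_close : `|t *: v + w - (t *: w0 + w)| <= eta / 2.
  rewrite opprD addrACA subrr addr0 -scalerBr normrZ.
  rewrite -[leRHS](@divfK _ (`|t| + 1)) ?gt_eqF // [leRHS]mulrC.
  by apply: ler_pM; rewrite ?normr_ge0 ?lerDl ?ltW.
have [||q qps ps_near] := Hps (t *: w0 + w).
- by have [_ L_lin] := lsubspace_lin_span [set` L]; apply: L_lin.
- have := ler_distD (t *: v + w) (t *: w0 + w) 0; rewrite !subr0 distrC.
  by move=> /le_trans; apply; rewrite addrC lerD.
exists q => //; apply: le_trans (ler_distD (t *: w0 + w) _ _) _.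
by rewrite (splitr eta) lerD.
Qed.

Lemma lin_span_has_ball_nets L : has_ball_nets (lin_span [set` L]).
Proof.
elim: L => [|v L L_nets] r eta eta_gt0.
  exists [:: 0] => e /lin_span_nil -> _; exists 0; first by rewrite inE.
  by rewrite subr0 normr0 ltW.
have [v_near|v_far] := pselect (closure (lin_span [set` L]) v).
  exact: has_ball_nets_cons_closure.
have [d d_gt0 d_le] : exists2 d : R, 0 < d & forall w, lin_span [set` L] w -> d <= `|v - w|.
  apply: contrapT => v_near; apply: v_far; apply/closure_normP => d d_gt0.
  apply: contrapT => d_le; apply: v_near; exists d => // w Lw.
  by rewrite leNgt; apply/negP => vw; apply: d_le; exists w.
exact: has_ball_nets_cons_far d_gt0 d_le r eta eta_gt0.
Qed.

Lemma norming_functionals L (eta : R) : 0 < eta ->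
  exists (m : nat) (fs : 'I_m -> X -> R), (forall i, contractive_functional (fs i)) /\
    forall e, lin_span [set` L] e -> exists i, (1 - eta) * `|e| <= fs i e.
Proof.
move=> eta_gt0; have sL := lsubspace_lin_span [set` L].
have /choice [F HF] : forall q : X, exists f, contractive_functional f /\ f q = `|q|.
  by move=> q; have [f] := exists_norming_functional q; exists f.
have [ps Hps] : exists ps : seq X, forall e, lin_span [set` L] e -> `|e| <= 1 ->
    exists2 q, q \in ps & `|e - q| <= eta / 2.
  by apply: lin_span_has_ball_nets; rewrite divr_gt0.
have index_ps q : q \in ps -> exists i : 'I_(size ps), nth 0 ps i = q.
  by move=> qps; exists (Ordinal (etrans (index_mem q ps) qps)); rewrite /= nth_index.
exists (size ps), (fun i => F (nth 0 ps i)); split=> [i|e Le].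
  by have [] := HF (nth 0 ps i).
have [->|e_neq0] := eqVneq e 0.
  have [|q qps _] := Hps 0 (lsubspace0 sL); first by rewrite normr0.
  have [i qi] := index_ps q qps; exists i.
  by have [[lf _] _] := HF (nth 0 ps i); rewrite normr0 mulr0 (linear_functional0 lf).
have e_gt0 : 0 < `|e| by rewrite normr_gt0.
pose e1 := `|e|^-1 *: e.
have e1_norm : `|e1| = 1 by rewrite normrZ normfV normr_id mulVf ?gt_eqF.
have [|q qps e1q] := Hps e1 (lsubspaceZ _ sL Le); first by rewrite e1_norm.
have [i qi] := index_ps q qps; exists i; rewrite /= qi.
have [[lf f_le] fq] := HF q.
have -> : e = `|e| *: e1 by rewrite scalerA divff ?gt_eqF // scale1r.
rewrite (linear_functionalZ lf) normrZ normr_id e1_norm mulr1 mulrC ler_pM2l //.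
have := f_le (q - e1); rewrite (linear_functionalB lf) fq ler_norml distrC => /andP [_].
have := lerB_dist e1 (e1 - q); rewrite subKr e1_norm.
lra.
Qed.

End FiniteSpan.

Section SpanWithSequence.
Context {R : realType} {X : normedModType R}.
Variables (A : set X) (f : nat -> X).

Lemma sum_widen (c : nat -> R) m M : (m <= M)%N ->
  \sum_(j < M) (if (j < m)%N then c j else 0) *: f j = \sum_(j < m) c j *: f j.
Proof.
move=> mM; rewrite (big_ord_widen M (fun j => c j *: f j) mM) [RHS]big_mkcond /=.
by apply: eq_bigr => i _; case: ifP; rewrite ?scale0r.
Qed.

Lemma lin_span_setU_range v : lin_span (A `|` range f) v ->
  exists g m (c : nat -> R), lin_span A g /\ v = g + \sum_(j < m) c j *: f j.
Proof.
have sA := lsubspace_lin_span A.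
apply: (lin_span_sub (P := [set v | exists g m (c : nat -> R),
  lin_span A g /\ v = g + \sum_(j < m) c j *: f j])).
  split; first by exists 0, 0%N, (fun _ => 0); rewrite big_ord0 addr0; split=> //; case: sA.
  move=> a _ _ [g1 [m1 [c1 [A1 ->]]]] [g2 [m2 [c2 [A2 ->]]]].
  pose c j := a * (if (j < m1)%N then c1 j else 0) + (if (j < m2)%N then c2 j else 0).
  exists (a *: g1 + g2), (maxn m1 m2), c; split; first by case: sA => _; apply.
  rewrite -(sum_widen c1 (leq_maxl m1 m2)) -(sum_widen c2 (leq_maxr m1 m2)).
  rewrite scalerDr scaler_sumr addrACA -big_split /=; congr (_ + _).
  by apply: eq_bigr => j _; rewrite scalerA -scalerDl.
move=> y [Ay|[k _ <-]].
  by exists y, 0%N, (fun _ => 0); rewrite big_ord0 addr0; split=> //; apply: sub_lin_span.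
exists 0, k.+1, (fun j => (j == k)%:R); split; first by case: sA.
rewrite add0r big_ord_recr /= eqxx scale1r big1 ?add0r // => j _.
by rewrite (ltn_eqF (ltn_ord j)) scale0r.
Qed.

End SpanWithSequence.

Lemma dependent_choice_mkseq (T : Type) (P : seq T -> T -> Prop) :
  (forall s, exists x, P s x) -> exists f : nat -> T, forall m, P (mkseq f m) (f m).
Proof.
move=> /choice [g Hg]; pose hist n := iter n (fun s => rcons s (g s)) [::].
exists (fun n => g (hist n)) => m.
suff -> : mkseq (fun n => g (hist n)) m = hist m by exact: Hg.
by elim: m => [//|m IH]; rewrite mkseqS IH.
Qed.

Section IncreasingSequence.
Variable phi : nat -> nat.
Hypothesis phi_incr : {homo phi : m n / (m < n)%N}.

Lemma increasing_geq n : (n <= phi n)%N.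
Proof. by elim: n => [//|n IH]; apply: leq_ltn_trans IH (phi_incr (ltnSn n)). Qed.

Lemma increasing_cvgny : phi @ \oo --> \oo.
Proof.
apply/cvgnyPge => A; near=> n; apply: leq_trans (increasing_geq n).
by near: n; apply: nbhs_infty_ge.
Unshelve. all: by end_near.
Qed.

End IncreasingSequence.

Lemma increasing_choice (P : seq nat -> nat -> Prop) (a : nat) :
  (forall s N, exists2 k, (N <= k)%N & P s k) ->
  exists tau : nat -> nat, [/\ {homo tau : m n / (m < n)%N},
    forall j, (a < tau j)%N & forall m, P (mkseq tau m) (tau m)].
Proof.
move=> P_often.
have [tau Htau] : exists tau : nat -> nat,
    forall m, (last a (mkseq tau m) < tau m)%N /\ P (mkseq tau m) (tau m).
  apply: (dependent_choice_mkseq (P := fun s k => (last a s < k)%N /\ P s k)) => s.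
  by have [k Nk Pk] := P_often s (last a s).+1; exists k.
have tau_incr : {homo tau : m n / (m < n)%N}.
  apply: homo_ltn => [? ? ?|n]; first exact: ltn_trans.
  by have [+ _] := Htau n.+1; rewrite mkseqS last_rcons.
exists tau; split=> // [j|m]; last by case: (Htau m).
exact: leq_trans (Htau 0).1 (ltnW_homo tau_incr (leq0n j)).
Qed.

Section SubsequenceProperties.
Context {R : realType} {X : normedModType R}.
Variables (x : nat -> X) (phi : nat -> nat).
Hypothesis phi_incr : {homo phi : m n / (m < n)%N}.

Lemma weak_cvg_subseq l : weak_cvg x l -> weak_cvg (x \o phi) l.
Proof.
by move=> x_weak f lf f_cont; apply: cvg_comp (increasing_cvgny phi_incr) (x_weak f lf f_cont).
Qed.

Lemma almost_overcomplete_subseq : almost_overcomplete x -> almost_overcomplete (x \o phi).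
Proof. by move=> x_ao psi psi_incr; apply: x_ao => m n mn; apply/phi_incr/psi_incr. Qed.

End SubsequenceProperties.

Lemma weak_cvg_subr {R : realType} {X : normedModType R} (x : nat -> X) (l : X) :
  weak_cvg x l -> weak_cvg (fun k => x k - l) 0.
Proof.
move=> x_weak f lf f_cont; rewrite (linear_functional0 lf).
under eq_fun do rewrite (linear_functionalB lf).
by rewrite -(subrr (f l)); apply: cvgB => //; [apply: x_weak | apply: cvg_cst].
Qed.

Section BasicSequence.
Context {R : realType} {X : normedModType R}.

Lemma lower_estimate_step (a x y z : R) : 0 <= a <= 2^-1 -> 0 <= x ->
  (2^-1 + a) * x <= y -> (1 - a / 2) * y <= z -> (2^-1 + a / 2) * x <= z.
Proof.
move=> /andP [a_ge0 a_le] x_ge0 xy yz.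
have a2_ge0 : 0 <= 1 - a / 2 by lra.
have := ler_wpM2l a2_ge0 xy.
have : 0 <= a * (2^-1 - a) * x by rewrite !mulr_ge0 ?subr_ge0.
nra.
Qed.

(* The factors [1 - 2 ^- m.+2] are accumulated through the invariant
   [2^-1 + 2 ^- m.+1], which stays above [2^-1]. *)
Lemma basic_lower_estimate (L0 : seq X) (z : nat -> X) :
  (forall m e t, lin_span [set` L0 ++ mkseq z m] e ->
     (1 - 2 ^- m.+2) * `|e| <= `|e + t *: z m|) ->
  forall m (c : nat -> R) e, lin_span [set` L0] e ->
    (2^-1 + 2 ^- m.+1) * `|e| <= `|e + \sum_(j < m) c j *: z j|.
Proof.
move=> z_orth; elim=> [|m IH] c e Le.
  by rewrite big_ord0 addr0 expr1 -div1r -splitr mul1r.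
have sL := lsubspace_lin_span [set` L0 ++ mkseq z m].
have Lm : lin_span [set` L0 ++ mkseq z m] (e + \sum_(j < m) c j *: z j).
  apply: lsubspaceD => //; first by apply: lin_span_subset Le => v /=; rewrite mem_cat => ->.
  apply: lsubspace_sum => // j _; apply: lsubspaceZ => //; apply: sub_lin_span.
  by rewrite /= mem_cat /mkseq (map_f z) ?orbT // mem_iota add0n ltn_ord.
have a_le : 2 ^- m.+1 <= 2^-1 :> R.
  rewrite lef_pV2 ?posrE ?exprn_gt0 // exprS; apply: ler_peMr => //.
  by apply: exprn_ege1; rewrite ler1n.
have a2 : 2 ^- m.+2 = 2 ^- m.+1 / 2 :> R by rewrite [in LHS]exprS invfM mulrC.
rewrite a2 big_ord_recr /= addrA.
apply: lower_estimate_step (IH c e Le) _; first by rewrite a_le invr_ge0 exprn_ge0.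
  exact: normr_ge0.
by rewrite -a2; exact: z_orth.
Qed.

End BasicSequence.

Section WeaklyNull.
Context {R : realType} {X : normedModType R}.

(* Either [|t| eps >= 2 |e|] and the triangle inequality suffices, or [f]
   evaluates [e + t *: w] almost as [e]. *)
Lemma almost_orthogonal_of_norming (f : X -> R) (e w : X) (d eps t : R) :
  contractive_functional f -> 0 <= d -> eps <= `|w| ->
  (1 - d / 2) * `|e| <= f e -> `|f w| <= d * eps / 4 ->
  (1 - d) * `|e| <= `|e + t *: w|.
Proof.
move=> [lf f_le] d_ge0 w_ge fe fw.
have e_ge0 := normr_ge0 e; have t_ge0 := normr_ge0 t.
have [t_big|t_small] := leP (2 * `|e|) (`|t| * eps).
  have := lerB_normD (t *: w) e; rewrite [t *: w + e]addrC normrZ.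
  have : `|t| * eps <= `|t| * `|w| by apply: ler_wpM2l.
  nra.
have := le_trans (ler_norm _) (f_le (e + t *: w)).
rewrite (linear_functionalD lf) (linear_functionalZ lf).
have : - (`|t| * `|f w|) <= t * f w.
  by rewrite -normrM lerNl -mulrN (le_trans (ler_norm _)) ?normrM ?normrN.
have : `|t| * `|f w| <= `|t| * (d * eps / 4) by apply: ler_wpM2l.
nra.
Qed.

Variables (u : nat -> X) (eps : R).
Hypotheses (eps_gt0 : 0 < eps) (u_ge : forall k, eps <= `|u k|) (u_weak : weak_cvg u 0).

Lemma weakly_null_almost_orthogonal (L : seq X) (d : R) : 0 < d ->
  \forall k \near \oo, forall e t, lin_span [set` L] e -> (1 - d) * `|e| <= `|e + t *: u k|.
Proof.
move=> d_gt0; have d2_gt0 : 0 < d / 2 by rewrite divr_gt0.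
have [m [fs [fs_contr fs_norming]]] := norming_functionals L d2_gt0.
have fs_small : \forall k \near \oo, forall i, `|fs i (u k)| < d * eps / 4.
  apply: filter_forall => i; have [lf _] := fs_contr i.
  apply: cvgr0_norm_lt; last by rewrite !divr_gt0 ?mulr_gt0.
  have := u_weak lf (contractive_functional_continuous (fs_contr i)).
  by rewrite (linear_functional0 lf).
near=> k => e t Le; have [i fe] := fs_norming e Le.
apply: (almost_orthogonal_of_norming _ (fs_contr i) (ltW d_gt0) (u_ge k)) => //.
exact/ltW/(near fs_small k).
Unshelve. all: by end_near.
Qed.

Lemma weakly_null_basic_subsequence (L0 : seq X) (a : nat) : exists tau : nat -> nat,
  [/\ {homo tau : m n / (m < n)%N}, forall j, (a < tau j)%N &
      forall m (c : nat -> R) e, lin_span [set` L0] e ->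
        2^-1 * `|e| <= `|e + \sum_(j < m) c j *: u (tau j)|].
Proof.
have pow2V_gt0 n : 0 < 2 ^- n :> R by rewrite invr_gt0 exprn_gt0.
pose P s k := forall e t, lin_span [set` L0 ++ map u s] e ->
  (1 - 2 ^- (size s).+2) * `|e| <= `|e + t *: u k|.
have P_often s N : exists2 k, (N <= k)%N & P s k.
  have [k [Nk Pk]] := filter_ex (@filterI _ _ _ _ _ (nbhs_infty_ge N)
    (weakly_null_almost_orthogonal (L0 ++ map u s) (pow2V_gt0 (size s).+2))).
  by exists k.
have [tau [tau_incr a_tau tau_orth]] := increasing_choice a P_often.
exists tau; split=> // m c e Le.
have z_orth n e' t : lin_span [set` L0 ++ mkseq (u \o tau) n] e' ->
    (1 - 2 ^- n.+2) * `|e'| <= `|e' + t *: u (tau n)|.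
  by have := tau_orth n e' t; rewrite size_mkseq /mkseq map_comp.
apply: le_trans (basic_lower_estimate z_orth m c Le).
by rewrite ler_wpM2r // lerDl ltW.
Qed.

End WeaklyNull.

Section FarWeakLimit.
Context {R : realType} {X : normedModType R}.
Variables (y : nat -> X) (l : X) (eps : R).
Hypotheses (eps_gt0 : 0 < eps) (y_far : forall k, eps <= `|y k - l|) (y_weak : weak_cvg y l).

Lemma far_weak_limit_separated (F : seq X) : exists a tau,
  [/\ {homo tau : m n / (m < n)%N}, forall j, (a < tau j)%N &
      ~ closure (lin_span ([set` F] `|` range (y \o tau))) (y a)].
Proof.
have u_weak := weak_cvg_subr y_weak.
have half_gt0 : 0 < 2^-1 :> R by rewrite invr_gt0.
have [a a_orth] := filter_ex (weakly_null_almost_orthogonal eps_gt0 y_far u_weak (l :: F) half_gt0).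
have ya_far g : lin_span [set` l :: F] g -> eps / 3 <= `|g + (y a - l)|.
  move=> Lg; have := a_orth g 1 Lg; rewrite scale1r.
  have := lerB_normD (y a - l) g; rewrite [_ + g]addrC.
  have := y_far a; have := normr_ge0 g; lra.
have [tau [tau_incr a_tau tau_basic]] :=
  weakly_null_basic_subsequence eps_gt0 y_far u_weak (y a :: l :: F) a.
exists a, tau; split=> // /closure_normP /(_ (eps / 6)) [|v Lv ya_v].
  by rewrite divr_gt0.
have [g [m [c [Fg v_eq]]]] := lin_span_setU_range Lv; rewrite {v Lv}v_eq in ya_v.
pose C := \sum_(j < m) c j.
have lF_gCl : lin_span [set` l :: F] (g + C *: l).
  apply: lsubspaceD; [exact: lsubspace_lin_span| exact: lin_span_consr _ Fg |].
  exact: lsubspaceZ (lsubspace_lin_span _) (lin_span_consl _ _).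
have lF_e : lin_span [set` l :: F] (l - (g + C *: l)).
  exact: lsubspaceB (lsubspace_lin_span _) (lin_span_consl _ _) lF_gCl.
have := ya_far _ lF_e; rewrite addrC subrKA => e_far.
have Le : lin_span [set` y a :: l :: F] (y a - (g + C *: l)).
  exact: lsubspaceB (lsubspace_lin_span _) (lin_span_consl _ _) (lin_span_consr _ lF_gCl).
have := tau_basic m (fun j => - c j) _ Le.
have -> : \sum_(j < m) - c j *: (y (tau j) - l) = C *: l - \sum_(j < m) c j *: y (tau j).
  by rewrite scaler_suml -sumrB; apply: eq_bigr => j _; rewrite scaleNr scalerBr opprB.
have -> : y a - (g + C *: l) + (C *: l - \sum_(j < m) c j *: y (tau j)) =
    y a - (g + \sum_(j < m) c j *: y (tau j)) by rewrite !opprD !addrA subrK.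
by move=> /le_lt_trans/(_ ya_v); lra.
Qed.

End FarWeakLimit.

Section FiniteCodimension.
Context {R : realType} {X : normedModType R}.

Lemma tall_mx_left_kernel n (M : 'M[R]_(n.+1, n)) : exists2 c : 'rV[R]_n.+1, c != 0 & c *m M = 0.
Proof.
have : kermx M != 0 by rewrite -mxrank_eq0 mxrank_ker subn_eq0 -ltnNge ltnS rank_leq_col.
case/eqP/row_matrixP/existsNP => i Ki; exists (row i (kermx M)).
  by apply: contra_notN Ki => /eqP ->; rewrite row0.
by rewrite -row_mul mulmx_ker row0.
Qed.

Lemma finite_codim_dependent (Z : set X) : lsubspace Z -> finite_codim Z ->
  exists n, forall b : 'I_n.+1 -> X,
    exists2 c : 'I_n.+1 -> R, (exists i, c i != 0) & Z (\sum_i c i *: b i).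
Proof.
move=> sZ [n [e Ze]]; exists n => b.
have [zc zcP] := choice (fun i : 'I_n.+1 => Ze (b i)).
have {}zcP i : exists c : 'I_n -> R, Z (zc i) /\ b i = zc i + \sum_k c k *: e k.
  by have [Zz [c ->]] := zcP i; exists c.
have [cb cbP] := choice zcP.
have [c c_neq0 cM] := tall_mx_left_kernel (\matrix_(i, k) cb i k).
exists (fun i => c ord0 i).
  apply: contrapT => c0; move: c_neq0; apply/negP/negPn/eqP/rowP => i; rewrite mxE.
  by apply/eqP; apply: contrapT => ci; apply: c0; exists i; apply/negP.
have -> : \sum_i c ord0 i *: b i = \sum_i c ord0 i *: zc i.
  under eq_bigr do rewrite (cbP _).2 scalerDr.
  rewrite big_split /= -[RHS]addr0; congr (_ + _).
  under eq_bigr do rewrite scaler_sumr.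
  rewrite exchange_big big1 // => k _.
  under eq_bigr do rewrite scalerA.
  have := congr1 (fun N : 'M[R]_(1, n) => N ord0 k) cM.
  rewrite !mxE (eq_bigr (fun i => c ord0 i * cb i k)) => [ck|i _]; last by rewrite mxE.
  by rewrite -scaler_suml ck scale0r.
by apply: lsubspace_sum => // i _; apply: lsubspaceZ => //; case: (cbP i).
Qed.

(* Solve a nontrivial relation among [b 0, ..., b n] modulo [Z] for the [b j]
   with least nonzero coefficient. *)
Lemma not_finite_codim_of_separated (Z : set X) (W : nat -> set X) (b : nat -> X) :
  lsubspace Z -> (forall j, lsubspace (W j)) -> (forall j, Z `<=` W j) ->
  (forall i j, (j < i)%N -> W j (b i)) -> (forall j, ~ W j (b j)) -> ~ finite_codim Z.
Proof.
move=> sZ sW ZW bW b_notW /(finite_codim_dependent sZ) [n /(_ (fun i => b i))].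
case=> c [i0 ci0] Zc.
case: (arg_minnP (P := fun i => c i != 0) (fun i : 'I_n.+1 => val i) ci0) => j cj j_min.
apply: (b_notW j).
have W_rest : W j (\sum_(i | i != j) c i *: b i).
  apply: lsubspace_sum => // i ij; have [ilj|jli] := ltnP i j.
    have /eqP -> : c i == 0 by apply: contraTT ilj => /j_min; rewrite -leqNgt.
    by rewrite scale0r; apply: lsubspace0.
  apply: lsubspaceZ => //; apply: bW; rewrite ltn_neqAle jli andbT.
  by apply: contra ij => /eqP /val_inj ->.
have W_j : W j (c j *: b j).
  have := lsubspaceB (sW j) (ZW j _ Zc) W_rest.
  by rewrite (bigD1 j) //= addrK.
by rewrite -[b j]scale1r -(mulVf cj) -scalerA; apply: lsubspaceZ.
Qed.

End FiniteCodimension.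

Section Diagonal.
Context {R : realType} {X : normedModType R}.
Variables (y : nat -> X) (l : X) (eps : R).
Hypotheses (eps_gt0 : 0 < eps) (y_far : forall k, eps <= `|y k - l|) (y_weak : weak_cvg y l).

Lemma nested_separated_subsequences : exists (sigma : nat -> nat -> nat) (a : nat -> nat),
  [/\ forall j, {homo sigma j : m n / (m < n)%N},
      forall j, exists2 tau, (forall i, (a j < tau i)%N) & sigma j.+1 = sigma j \o tau &
      forall j, ~ closure (lin_span ([set` mkseq (fun i => y (sigma i.+1 0%N)) j]
                                     `|` range (y \o sigma j.+1))) (y (sigma j (a j)))].
Proof.
(* After [j] steps the history is the list of the pairs [(sigma i.+1, a i)],
   [i < j], and [cur] reads off the current subsequence [sigma j]. *)
pose cur (s : seq ((nat -> nat) * nat)) := last id (map fst s).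
pose Q s (p : (nat -> nat) * nat) := {homo cur s : m n / (m < n)%N} ->
  [/\ {homo p.1 : m n / (m < n)%N},
      exists2 tau, (forall i, (p.2 < tau i)%N) & p.1 = cur s \o tau &
      ~ closure (lin_span ([set` map (fun q => y (q.1 0%N)) s] `|` range (y \o p.1)))
          (y (cur s p.2))].
have [st Hst] : exists st, forall j, Q (mkseq st j) (st j).
  apply: dependent_choice_mkseq => s.
  have [cur_incr|cur_not_incr] := pselect {homo cur s : m n / (m < n)%N}; last first.
    by exists (id, 0%N) => /cur_not_incr.
  have [a [tau [tau_incr a_tau sep]]] := @far_weak_limit_separated R X (y \o cur s) l eps
    eps_gt0 (fun k => y_far _) (weak_cvg_subseq cur_incr y_weak) (map (fun q => y (q.1 0%N)) s).
  exists (cur s \o tau, a) => _; split=> [m n mn||//]; first exact/cur_incr/tau_incr.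
  by exists tau.
pose sigma j := cur (mkseq st j).
have sigmaS j : sigma j.+1 = (st j).1 by rewrite /sigma /cur mkseqS map_rcons last_rcons.
have sigma_incr j : {homo sigma j : m n / (m < n)%N}.
  by elim: j => [//|j IH]; rewrite sigmaS; have [] := Hst j IH.
exists sigma, (fun j => (st j).2); split=> // j.
  have [_ [tau a_tau st_tau] _] := Hst j (sigma_incr j).
  by exists tau; rewrite ?sigmaS.
have [_ _ sep] := Hst j (sigma_incr j).
rewrite sigmaS (_ : mkseq _ j = map (fun q => y (q.1 0%N)) (mkseq st j)) //.
by rewrite /mkseq -map_comp; apply: eq_map => i /=; rewrite sigmaS.
Qed.

Lemma far_weak_limit_not_almost_overcomplete : ~ almost_overcomplete y.
Proof.
have [sigma [a [sigma_incr sigmaS sep]]] := nested_separated_subsequences.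
have sigma_nested j i : (j <= i)%N -> forall k, exists k', sigma i k = sigma j k'.
  elim: i => [|i IH]; first by rewrite leqn0 => /eqP -> k; exists k.
  rewrite leq_eqVlt => /predU1P [-> k|/IH nested k]; first by exists k.
  by have [tau _ ->] := sigmaS i; apply: nested.
pose diag i := sigma i.+1 0%N.
have diag_incr : {homo diag : m n / (m < n)%N}.
  apply: homo_ltn => [? ? ?|i]; first exact: ltn_trans.
  rewrite /diag; have [tau a_tau ->] := sigmaS i.+1.
  exact/sigma_incr/(leq_ltn_trans _ (a_tau 0%N)).
pose W j := closure (lin_span ([set` mkseq (y \o diag) j] `|` range (y \o sigma j.+1))).
have sW j : lsubspace (W j) by apply/lsubspace_closure/lsubspace_lin_span.
move=> /(_ _ diag_incr).
apply: (not_finite_codim_of_separated (W := W) (b := fun j => y (sigma j (a j)))) => //.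
- exact/lsubspace_closure/lsubspace_lin_span.
- move=> j; apply: closureS; apply: lin_span_subset => _ [i _ <-].
  have [ij|ji] := ltnP i j; first by left; rewrite /= /mkseq (map_f (y \o diag)) // mem_iota.
  by right; have [k diag_k] := sigma_nested j.+1 i.+1 ji 0%N; exists k; rewrite //= /diag diag_k.
- move=> i j ji; apply/subset_closure/sub_lin_span; right.
  by have [k sigma_k] := sigma_nested j.+1 i ji (a i); exists k; rewrite //= sigma_k.
Qed.

End Diagonal.

Lemma not_cvg_far_subseq {R : realType} {X : normedModType R} (x : nat -> X) (l : X) :
  ~ (x @ \oo --> l) -> exists2 eps : R, 0 < eps &
    exists2 phi : nat -> nat, {homo phi : m n / (m < n)%N} & forall k, eps <= `|x (phi k) - l|.
Proof.
move=> x_ncvg.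
have [eps eps_gt0 x_far_often] : exists2 eps : R, 0 < eps &
    forall N, exists2 n, (N <= n)%N & eps <= `|x n - l|.
  apply: contrapT => x_near; apply: x_ncvg; apply/cvgrPdist_lt => eps eps_gt0.
  apply: contrapT => x_not_near; apply: x_near; exists eps => // N.
  apply: contrapT => x_near_N; apply: x_not_near; exists N => // n /= Nn.
  by rewrite distrC ltNge; apply/negP => x_far_n; apply: x_near_N; exists n.
have [phi [phi_incr _ phi_far]] := increasing_choice 0 (fun _ => x_far_often).
by exists eps => //; exists phi.
Qed.

Unset Implicit Arguments.

Theorem lemma5p4 (R : realType) (X : normedModType R) (x : nat -> X) (l : X) :
  almost_overcomplete x -> weak_cvg x l -> x @ \oo --> l.
Proof.
move=> x_ao x_weak; apply: contrapT => /not_cvg_far_subseq [eps eps_gt0 [phi phi_incr x_far]].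
apply: (far_weak_limit_not_almost_overcomplete eps_gt0 x_far (weak_cvg_subseq phi_incr x_weak)).
exact: almost_overcomplete_subseq.
Qed.
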